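(* Let $n,t,t'$ be positive integers with $t-1\ge t'$. Then $$R(\mathcal{C}_{t,t-1,t'},Q_n)=n+t+2.$$
   Context: $C_t$ denotes a chain on $t$ elements. The parallel composition $P_1+P_2+P_3$ of posets is the disjoint union of copies of $P_1,P_2,P_3$ where elements of different copies are incomparable. $\mathcal{C}_{t_1,t_2,t_3}=C_{t_1}+C_{t_2}+C_{t_3}$. $Q_n$ is the Boolean lattice of all subsets of an $n$-element set ordered by inclusion. A copy of $P$ in $Q$ is an induced subposet of $Q$ isomorphic to $P$. $R(P_1,P_2)$ is the smallest integer $N$ such that every blue/red coloring of the elements of $Q_N$ contains an all-blue copy of $P_1$ or an all-red copy of $P_2$. *)

From mathcomp Require Import all_boot.
Set Implicit Arguments. Unset Strict Implicit. Unset Printing Implicit Defensive.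

(* A copy of (T, leT) in the Boolean lattice Q_N (subsets of 'I_N ordered  *)
(* by inclusion) is an injective map f with leT x y <-> f x \subset f y,   *)
(* i.e. an induced subposet of Q_N isomorphic to (T, leT).                 *)
Definition is_copy (T : finType) (leT : rel T) (N : nat)
  (f : T -> {set 'I_N}) : Prop :=
  injective f /\ forall x y : T, leT x y = (f x \subset f y).

Definition Qn_le (n : nat) : rel {set 'I_n} := fun A B => A \subset B.

(* C_{t1,t2,t3} = C_t1 + C_t2 + C_t3 : disjoint union of three chains. *)
Definition chain3 (t1 t2 t3 : nat) : finType := ('I_t1 + 'I_t2 + 'I_t3)%type.

Definition chain3_le (t1 t2 t3 : nat) : rel (chain3 t1 t2 t3) :=
  fun x y =>
    match x, y with
    | inl (inl a), inl (inl b) => (a <= b)%N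
    | inl (inr a), inl (inr b) => (a <= b)%N
    | inr a, inr b => (a <= b)%N
    | _, _ => false
    end.

(* Every blue/red colouring of Q_N (c X = true means X is blue) contains an *)
(* all-blue copy of P1 or an all-red copy of P2.                            *)
Definition ramsey_prop (T1 : finType) (le1 : rel T1)
  (T2 : finType) (le2 : rel T2) (N : nat) : Prop :=
  forall c : {set 'I_N} -> bool,
    (exists f : T1 -> {set 'I_N}, is_copy le1 f /\ forall x, c (f x))
    \/ (exists g : T2 -> {set 'I_N}, is_copy le2 g /\ forall x, ~~ c (g x)).

Definition is_ramsey_number (T1 : finType) (le1 : rel T1)
  (T2 : finType) (le2 : rel T2) (R : nat) : Prop :=
  ramsey_prop le1 le2 R /\ forall N, (N < R)%N -> ~ ramsey_prop le1 le2 N.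

From mathcomp Require Import all_boot zify.
Set Implicit Arguments. Unset Strict Implicit. Unset Printing Implicit Defensive.

(* Upper bound: in Q_(n+t+2) call the last t+2 coordinates extra and number
   them 0, ..., t+1.  For increasing sets Y_0 <= ... <= Y_K of extra
   coordinates, a colouring either has a blue chain S_0 u Y_0 <= ... <= S_K u Y_K
   with S_i <= [n], or a red Q_n, namely S |-> S u Y_(h S) where h S is the
   height of the longest blue chain of this shape below S.  Running this with
   Y_i = {s} u {1, ..., i} for the three markers s = 0, t, t+1 gives three blue
   chains; distinct markers make them pairwise incomparable.
   Lower bound: in Q_(n+t+1) colour blue the sets of size <= 1 or >= n+2.  A
   red Q_n would need n+1 levels among 2, ..., n+1.  A blue copy consists of
   nonempty proper sets, so its t-chain runs from a singleton {a} to a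
   co-singleton [N] - {u}; every other element avoids a and contains u.  The
   (t-1)-chain can then not start at {u}, which lies below the third chain, so
   it climbs to [N] - {a}, which contains the third chain's bottom. *)

Section WidenSet.
Variables (n N : nat) (le_nN : n <= N).

Definition widen_set (S : {set 'I_n}) : {set 'I_N} := widen_ord le_nN @: S.

Lemma widen_ord_inj : injective (widen_ord le_nN).
Proof. by move=> x y /(congr1 val) /= /val_inj. Qed.

Lemma mem_widen_set S x : (widen_ord le_nN x \in widen_set S) = (x \in S).
Proof. by rewrite mem_imset //; apply: widen_ord_inj. Qed.

End WidenSet.

Section BlueChainOrRedCube.
Variables (n N : nat) (le_nN : n <= N) (c : {set 'I_N} -> bool).
Variable Y : nat -> {set 'I_N}.

Fixpoint blue_chain_below (j : nat) (S : {set 'I_n}) : bool :=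
  if j is j'.+1 then
    [exists S' : {set 'I_n}, [&& S' \subset S, blue_chain_below j' S'
                                & c (widen_set le_nN S' :|: Y j')]]
  else true.

Fixpoint blue_height (j : nat) (S : {set 'I_n}) : nat :=
  if j is j'.+1 then (if blue_chain_below j S then j else blue_height j' S)
  else 0.

Lemma blue_chain_belowS j (S T : {set 'I_n}) :
  S \subset T -> blue_chain_below j S -> blue_chain_below j T.
Proof.
case: j => [//|j] ST /existsP [S' /and3P [S'S chS' blue]]; apply/existsP.
by exists S'; rewrite chS' blue (subset_trans S'S ST).
Qed.

Lemma blue_heightP j S : blue_chain_below (blue_height j S) S.
Proof. by elim: j => [//|j IH] /=; case: ifP. Qed.

Lemma blue_height_le j S : blue_height j S <= j.
Proof. by elim: j => [//|j IH] /=; case: ifP => // _; apply: leqW. Qed.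

Lemma blue_height_max j S i :
  i <= j -> blue_chain_below i S -> i <= blue_height j S.
Proof.
elim: j => [|j IH]; first by rewrite leqn0 => /eqP ->.
rewrite /=; case: ifP => [_ //|chN]; rewrite leq_eqVlt => /orP [/eqP ->|]; last exact: IH.
by rewrite /= chN.
Qed.

Lemma blue_height_mono j (S T : {set 'I_n}) :
  S \subset T -> blue_height j S <= blue_height j T.
Proof.
move=> ST; apply: blue_height_max; first exact: blue_height_le.
exact: blue_chain_belowS ST (blue_heightP _ _).
Qed.

Lemma blue_chain_belowP j S : blue_chain_below j S ->
  exists F : nat -> {set 'I_n}, [/\ {homo F : i k / i <= k >-> i \subset k},
    forall i, i < j -> c (widen_set le_nN (F i) :|: Y i) & forall i, F i \subset S].
Proof.
elim: j S => [|j IH] S; first by move=> _; exists (fun=> S); split=> // i k.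
case/existsP=> S' /and3P [S'S /IH [F [F_mono F_blue FS']] blue].
exists (fun i => if i < j then F i else S'); split=> [i k le_ik|i lt_ij1|i].
- case: ifP => lt_ij; case: ifP => lt_kj; [exact: F_mono|exact: FS'| |exact: subxx].
  by move: lt_ij lt_kj le_ik; lia.
- case: ifP => [lt_ij|]; first exact: F_blue.
  by move: lt_ij1; rewrite ltnS leq_eqVlt => /orP [/eqP -> _|->].
- by case: ifP => // _; apply: subset_trans (FS' i) S'S.
Qed.

Hypothesis Y_mono : {homo Y : i k / i <= k >-> i \subset k}.
Hypothesis Y_high : forall i (x : 'I_N), x \in Y i -> n <= x.

Definition cube_lift (K : nat) (S : {set 'I_n}) : {set 'I_N} :=
  widen_set le_nN S :|: Y (blue_height K S).

Lemma cube_lift_copy K : is_copy (@Qn_le n) (cube_lift K).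
Proof.
have reflect_sub S T : cube_lift K S \subset cube_lift K T -> S \subset T.
  move=> sub; apply/subsetP => x xS.
  have /(subsetP sub) : widen_ord le_nN x \in cube_lift K S.
    by rewrite in_setU mem_widen_set xS.
  by rewrite in_setU mem_widen_set => /orP [//|/Y_high]; rewrite leqNgt /= ltn_ord.
have le_lift S T : Qn_le S T = (cube_lift K S \subset cube_lift K T).
  apply/idP/idP=> [ST|]; last exact: reflect_sub.
  by apply: setUSS; [apply: imsetS|apply/Y_mono/blue_height_mono].
split=> // S T eq_ST; apply/eqP; rewrite eqEsubset.
by rewrite !reflect_sub ?eq_ST.
Qed.

Lemma cube_lift_red K S :
  ~~ [exists T, blue_chain_below K.+1 T] -> ~~ c (cube_lift K S).
Proof.
move=> noK1; apply/negP => blue.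
have chS : blue_chain_below (blue_height K S).+1 S.
  by apply/existsP; exists S; rewrite subxx blue andbT; apply: blue_heightP.
have := blue_height_le K S; rewrite leq_eqVlt => /orP [/eqP hK|lt_hK].
  by case/negP: noK1; apply/existsP; exists S; rewrite -hK.
by have := blue_height_max lt_hK chS; rewrite ltnn.
Qed.

Lemma blue_chain_or_red_cube K :
  (exists g : {set 'I_n} -> {set 'I_N},
      is_copy (@Qn_le n) g /\ forall S, ~~ c (g S)) \/
  (exists F : nat -> {set 'I_n}, {homo F : i k / i <= k >-> i \subset k} /\
      forall i, i <= K -> c (widen_set le_nN (F i) :|: Y i)).
Proof.
case: (boolP [exists S, blue_chain_below K.+1 S]) => [/existsP [S] | noK1].
  by case/blue_chain_belowP=> F [F_mono F_blue _]; right; exists F.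
left; exists (cube_lift K); split; first exact: cube_lift_copy.
by move=> S; apply: cube_lift_red.
Qed.

End BlueChainOrRedCube.

(* Coordinate n + d of Q_N is the extra coordinate d, and tail_set n N s i
   is {s} u {1, ..., i} among the extra coordinates. *)
Definition tail_set (n N s i : nat) : {set 'I_N} :=
  [set x : 'I_N | (n <= x) && ((x - n == s) || (0 < x - n <= i))].

Lemma tail_set_mono n N s : {homo tail_set n N s : i k / i <= k >-> i \subset k}.
Proof.
move=> i k le_ik; apply/subsetP => x; rewrite !inE.
by case/andP=> -> /orP [-> //|/andP [-> /leq_trans ->]]; rewrite ?orbT.
Qed.

Lemma tail_set_high n N s i (x : 'I_N) : x \in tail_set n N s i -> n <= x.
Proof. by rewrite inE => /andP []. Qed.

Section TailLift.
Variables (n N : nat) (le_nN : n <= N).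
Implicit Types (S T : {set 'I_n}) (s i k : nat).

Definition tail_lift S s i := widen_set le_nN S :|: tail_set n N s i.

Lemma mem_tail_lift S s i d (lt_dN : n + d < N) :
  (Ordinal lt_dN \in tail_lift S s i) = (d == s) || (0 < d <= i).
Proof.
rewrite in_setU inE /= leq_addr addKn /=.
by case: imsetP => // [[y _ /(congr1 val) /= eq_y]]; move: (ltn_ord y); lia.
Qed.

Lemma tail_lift_subset S T s i k :
  S \subset T -> i <= k -> tail_lift S s i \subset tail_lift T s k.
Proof. by move=> ST le_ik; apply: setUSS; [apply: imsetS|apply: tail_set_mono]. Qed.

Lemma tail_lift_not_subset S T s s' i k : n + s < N -> s != s' ->
  ~~ (0 < s <= k) -> ~~ (tail_lift S s i \subset tail_lift T s' k).
Proof.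
move=> lt_sN neq_ss' s_out; apply/subsetPn; exists (Ordinal lt_sN).
  by rewrite mem_tail_lift eqxx.
by rewrite mem_tail_lift (negbTE neq_ss') (negbTE s_out).
Qed.

Lemma tail_lift_subset_le S T s i k : tail_lift S s i \subset tail_lift T s k ->
  n + i < N -> 0 < i -> i != s -> i <= k.
Proof.
move=> sub lt_iN i_gt0 neq_is.
have /(subsetP sub) : Ordinal lt_iN \in tail_lift S s i.
  by rewrite mem_tail_lift i_gt0 leqnn orbT.
by rewrite mem_tail_lift (negbTE neq_is) i_gt0.
Qed.
End TailLift.

Lemma is_copy_antisym (T : finType) (le : rel T) N (f : T -> {set 'I_N}) :
  antisymmetric le -> (forall x y, le x y = (f x \subset f y)) -> is_copy le f.
Proof.
move=> le_anti f_mono; split=> // x y eq_f.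
by apply: le_anti; rewrite !f_mono eq_f subxx.
Qed.

Lemma chain3_le_anti t1 t2 t3 : antisymmetric (@chain3_le t1 t2 t3).
Proof.
case=> [[a|a]|a] [[b|b]|b] //= /andP [le_ab le_ba];
  by do ?congr (inl _); do ?congr (inr _); apply/val_inj/eqP; rewrite eqn_leq le_ab.
Qed.

Lemma ramsey_chain3_upper n tA tB tC : tB <= tA -> tC <= tA ->
  ramsey_prop (@chain3_le tA tB tC) (@Qn_le n) (n + tA + 2).
Proof.
move=> le_BA le_CA c; set N := n + tA + 2.
have le_nN : n <= N by rewrite /N; lia.
have chain s := blue_chain_or_red_cube le_nN c (@tail_set_mono n N s)
  (@tail_set_high n N s) tA.
case: (chain 0) => [red|[F0 [F0_mono F0_blue]]]; first by right.
case: (chain tA) => [red|[F1 [F1_mono F1_blue]]]; first by right.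
case: (chain tA.+1) => [red|[F2 [F2_mono F2_blue]]]; first by right.
left; pose f (x : chain3 tA tB tC) := match x with
  | inl (inl a) => tail_lift le_nN (F0 a) 0 a
  | inl (inr b) => tail_lift le_nN (F1 b) tA b
  | inr d => tail_lift le_nN (F2 d) tA.+1 d end.
exists f; split.
  apply: is_copy_antisym; first exact: chain3_le_anti.
  case=> [[a|a]|a] [[b|b]|b] /=; move: (ltn_ord a) (ltn_ord b) => lt_a lt_b;
  first [ by apply/esym/negbTE/tail_lift_not_subset; rewrite /N; lia
        | apply/idP/idP=> [le_ab|sub]; first (apply: tail_lift_subset => //;
            by [apply: F0_mono|apply: F1_mono|apply: F2_mono]);
          case: (posnP a) => [-> //|a_gt0];
          by apply: (tail_lift_subset_le sub) => //; rewrite /N; lia ].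
by case=> [[a|a]|a] /=; [apply: F0_blue|apply: F1_blue|apply: F2_blue];
  move: (ltn_ord a); lia.
Qed.

Lemma ltn_chain_addn (g : nat -> nat) m :
  (forall i, i < m -> g i < g i.+1) -> g 0 + m <= g m.
Proof.
elim: m => [|m IH] lt_g; first by rewrite addn0.
have := lt_g m (ltnSn m); have := IH (fun i lt_im => lt_g i (ltnW lt_im)); lia.
Qed.

Lemma Qn_copy_card_span n N (g : {set 'I_n} -> {set 'I_N}) :
  is_copy (@Qn_le n) g -> #|g set0| + n <= #|g setT|.
Proof.
case=> _ g_le; pose prefix i := [set j : 'I_n | j < i].
have prefix0 : prefix 0 = set0 by apply/setP=> j; rewrite !inE.
have prefixn : prefix n = setT by apply/setP=> j; rewrite !inE ltn_ord.
have grow i : i < n -> #|g (prefix i)| < #|g (prefix i.+1)|.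
  move=> lt_in; apply/proper_card; rewrite properE -!g_le /Qn_le.
  apply/andP; split; first by apply/subsetP=> j; rewrite !inE => /ltnW.
  by apply/subsetPn; exists (Ordinal lt_in); rewrite !inE /= ?ltnn.
by have := ltn_chain_addn grow; rewrite prefix0 prefixn.
Qed.

Lemma copy_proper (T : finType) (le : rel T) N (f : T -> {set 'I_N}) x y :
  is_copy le f -> le x y -> x != y -> f x \proper f y.
Proof.
case=> f_inj f_le le_xy; apply: contraNT; rewrite properE -f_le le_xy /= negbK.
by move=> sub; apply/eqP/f_inj/eqP; rewrite eqEsubset -f_le le_xy.
Qed.

Definition extreme_level (n N : nat) (X : {set 'I_N}) : bool :=
  (#|X| <= 1) || (n.+2 <= #|X|).

Section BlueChain3Copy.
Variables (n N tA tB tC : nat).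
Local Notation T := (chain3 tA.+1 tB.+1 tC.+1).
Variable f : T -> {set 'I_N}.
Hypothesis f_copy : is_copy (@chain3_le _ _ _) f.
Hypothesis f_blue : forall x, extreme_level n (f x).

Lemma copy_not_subset x y : ~~ chain3_le x y -> ~~ (f x \subset f y).
Proof. by case: f_copy => _ ->. Qed.

Definition across (x : T) : T :=
  match x with
  | inl (inl _) => inl (inr ord0)
  | inl (inr _) => inr ord0
  | inr _ => inl (inl ord0)
  end.

Lemma across_incomparable x :
  ~~ chain3_le x (across x) /\ ~~ chain3_le (across x) x.
Proof. by case: x => [[]|]. Qed.

Lemma chain3_copy_card_gt0 x : 0 < #|f x|.
Proof.
rewrite card_gt0; apply: contraNneq (copy_not_subset (across_incomparable x).1).
by move=> ->; rewrite sub0set.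
Qed.

Lemma chain3_copy_card_lt x : #|f x| < N.
Proof.
suff /proper_card : f x \proper setT by rewrite cardsT card_ord.
rewrite properE subsetT /=; apply: contra (copy_not_subset (across_incomparable x).2).
exact: subset_trans (subsetT _).
Qed.

(* Blue sets have size 1 or at least n+2, so [rank] drops the levels that a
   blue chain cannot use and still strictly increases along it. *)
Definition rank (X : {set 'I_N}) : nat := #|X| - n.+1.

Lemma rank_lt x y : chain3_le x y -> x != y -> rank (f x) < rank (f y).
Proof.
move=> le_xy neq_xy; have := proper_card (copy_proper f_copy le_xy neq_xy).
have := f_blue x; have := f_blue y; have := chain3_copy_card_gt0 x.
rewrite /rank /extreme_level; lia.
Qed.

Lemma rank_chain (e : nat -> T) m :
  (forall i, i < m -> chain3_le (e i) (e i.+1) && (e i != e i.+1)) ->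
  rank (f (e 0)) + m <= rank (f (e m)).
Proof.
move=> e_step; apply: (@ltn_chain_addn (fun i => rank (f (e i)))) => i /e_step.
by case/andP; apply: rank_lt.
Qed.

Definition chainA (i : nat) : T := inl (inl (inord i)).
Definition chainB (i : nat) : T := inl (inr (inord i)).

Lemma inord_step m i : i < m ->
  (@inord m i <= @inord m i.+1) && (@inord m i != inord i.+1).
Proof.
move=> lt_im; rewrite -val_eqE /= !inordK //; last exact: ltnW.
by rewrite leqnSn ltn_eqF.
Qed.

Lemma chainA_step i : i < tA ->
  chain3_le (chainA i) (chainA i.+1) && (chainA i != chainA i.+1).
Proof.
move/inord_step=> /andP [le_i neq_i]; rewrite /= le_i.
by apply: contra neq_i => /eqP [->].
Qed.

Lemma chainB_step i : i < tB ->
  chain3_le (chainB i) (chainB i.+1) && (chainB i != chainB i.+1).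
Proof.
move/inord_step=> /andP [le_i neq_i]; rewrite /= le_i.
by apply: contra neq_i => /eqP [->].
Qed.

Hypotheses (lt_BA : tB < tA) (le_N : N <= n + tB + 3).

Lemma chainA_ends : #|f (chainA 0)| = 1 /\ #|f (chainA tA)| = N.-1.
Proof.
have := rank_chain chainA_step; have := chain3_copy_card_lt (chainA tA).
have := f_blue (chainA 0); have := chain3_copy_card_gt0 (chainA 0).
rewrite /rank /extreme_level; lia.
Qed.

Lemma no_blue_chain3_copy : False.
Proof.
have [card_A0 card_AT] := chainA_ends.
have [a A0_eq] : exists a, f (chainA 0) = [set a] by apply/cards1P/eqP.
have [u AT_compl] : exists u, ~: f (chainA tA) = [set u].
  apply/cards1P; have := cardsC (f (chainA tA)); rewrite card_ord card_AT.
  by have := chain3_copy_card_lt (chainA tA); lia.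
have off_A x : ~~ chain3_le (chainA 0) x -> ~~ chain3_le x (chainA tA) ->
    (a \notin f x) && (u \in f x).
  move=> /copy_not_subset; rewrite A0_eq sub1set => -> /copy_not_subset.
  case/subsetPn=> z z_in z_out; suff <- : z = u by [].
  by apply/set1P; rewrite -AT_compl inE.
have /andP [a_C0 u_C0] := off_A (inr ord0) isT isT.
case/orP: (f_blue (chainB 0)) => [small|big].
  have /andP [_ u_B0] := off_A (chainB 0) isT isT.
  have B0_eq : f (chainB 0) = [set u].
    by apply/eqP; rewrite eq_sym eqEcard sub1set u_B0 cards1.
  have := copy_not_subset (x := chainB 0) (y := inr ord0) isT.
  by rewrite B0_eq sub1set u_C0.
have /andP [a_BT _] := off_A (chainB tB) isT isT.
have BT_eq : f (chainB tB) = [set~ a].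
  apply/eqP; rewrite eqEcard cardsC1 card_ord; apply/andP; split.
    by apply/subsetP=> z z_in; rewrite in_setC1; apply: contraNneq a_BT => <-.
  have := rank_chain chainB_step; move: big; rewrite /rank; lia.
have := copy_not_subset (x := inr ord0) (y := chainB tB) isT; rewrite BT_eq.
case/subsetPn=> z z_in; rewrite in_setC1 negbK => /eqP z_a.
by rewrite -z_a z_in in a_C0.
Qed.

End BlueChain3Copy.

Lemma ramsey_chain3_lower n N tA tB tC : tB < tA -> N <= n + tB + 3 ->
  ~ ramsey_prop (@chain3_le tA.+1 tB.+1 tC.+1) (@Qn_le n) N.
Proof.
move=> lt_BA le_N /(_ (@extreme_level n N)) [[f [f_copy f_blue]]|[g [g_copy g_red]]].
  exact: no_blue_chain3_copy f_copy f_blue lt_BA le_N.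
have := Qn_copy_card_span g_copy; have := g_red set0; have := g_red setT.
rewrite /extreme_level; lia.
Qed.

Theorem theorem6 (n t t' : nat) :
  (0 < n)%N -> (0 < t)%N -> (0 < t')%N -> (t' <= t - 1)%N ->
  is_ramsey_number (@chain3_le t (t - 1) t') (@Qn_le n) (n + t + 2).
Proof.
move=> _ t_gt0 t'_gt0 le_t't; split; first by apply: ramsey_chain3_upper; lia.
case: t t_gt0 le_t't => [|[|tB]] // _; first by move: t'_gt0; lia.
case: t' t'_gt0 => [|tC] // _ le_CB N lt_N.
rewrite subn1 /=; apply: ramsey_chain3_lower; lia.
Qed.
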